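(* Let $M$ be a Hausdorff space. (a) Every continuous function $f:M\to\mathbb{R}$ induces a continuous spectral family $\sigma_f:\mathbb{R}\to\mathcal{T}(M)$ by $\sigma_f(\lambda):=\mathrm{int}(f^{-1}(]-\infty,\lambda]))$; its admissible domain $\mathcal{D}(\sigma_f)$ equals $M$, and $f_{\sigma_f}=f$. (b) Conversely, if $\sigma:\mathbb{R}\to\mathcal{T}(M)$ is a continuous spectral family, then the induced function $f_\sigma:\mathcal{D}(\sigma)\to\mathbb{R}$ is continuous, and the spectral family $\sigma_{f_\sigma}$ in $\mathcal{T}(\mathcal{D}(\sigma))$ it induces satisfies $\sigma_{f_\sigma}(\lambda)=\sigma(\lambda)\cap\mathcal{D}(\sigma)$ for all $\lambda\in\mathbb{R}$.
   Context: $\mathcal{T}(M)$ is the complete lattice of open subsets of $M$ with $\bigvee_k U_k=\bigcup_k U_k$ and $\bigwedge_k U_k=\mathrm{int}(\bigcap_k U_k)$. A spectral family in $\mathcal{T}(M)$ is a map $\sigma:\mathbb{R}\to\mathcal{T}(M)$ with $\sigma(\lambda)\subseteq\sigma(\mu)$ for $\lambda\le\mu$, $\sigma(\lambda)=\mathrm{int}\bigcap_{\mu>\lambda}\sigma(\mu)$ for all $\lambda$, $\mathrm{int}\bigcap_\lambda\sigma(\lambda)=\emptyset$ and $\bigcup_\lambda\sigma(\lambda)=M$. It is continuous if $\overline{\sigma(\lambda)}\subseteq\sigma(\mu)$ whenever $\lambda<\mu$. The admissible domain is $\mathcal{D}(\sigma):=M\setminus\bigcap_{\lambda}\sigma(\lambda)$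 and the induced function is $f_\sigma(x):=\inf\{\lambda : x\in\sigma(\lambda)\}$ for $x\in\mathcal{D}(\sigma)$; for a function $g$ on a space $N$, $\sigma_g(\lambda):=\mathrm{int}(g^{-1}(]-\infty,\lambda]))$ in $\mathcal{T}(N)$. *)

From HB Require Import structures.
From mathcomp Require Import all_boot all_order all_algebra.
From mathcomp Require Import all_classical all_reals all_analysis.
Set Implicit Arguments. Unset Strict Implicit. Unset Printing Implicit Defensive.
Import Order.TTheory GRing.Theory Num.Theory.
Import numFieldTopology.Exports numFieldNormedType.Exports.
Local Open Scope classical_set_scope.
Local Open Scope ring_scope.

Section Spectral.
Context {R : realType} {T : topologicalType}.

Definition spectral_family (s : R -> set T) : Prop :=
  [/\ (forall l, open (s l)),
      (forall l m, l <= m -> s l `<=` s m),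
      (forall l, s l = interior (\bigcap_(m in `]l, +oo[) s m)),
      interior (\bigcap_(l in [set: R]) s l) = set0 &
      \bigcup_(l in [set: R]) s l = [set: T]].

Definition continuous_spectral_family (s : R -> set T) : Prop :=
  spectral_family s /\ (forall l m, l < m -> closure (s l) `<=` s m).

Definition adm_domain (s : R -> set T) : set T :=
  ~` \bigcap_(l in [set: R]) s l.

(* induced function f_sigma(x) = inf {l | x \in sigma(l)} (meaningful on D(sigma)) *)
Definition induced_fun (s : R -> set T) (x : T) : R :=
  inf [set l | s l x].

Definition sigma_of (g : T -> R) (l : R) : set T :=
  interior (g @^-1` `]-oo, l]).

End Spectral.

From HB Require Import structures.
From mathcomp Require Import all_boot all_order all_algebra.
From mathcomp Require Import all_classical all_reals all_analysis.
From mathcomp Require Import lra.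
Set Implicit Arguments. Unset Strict Implicit. Unset Printing Implicit Defensive.
Import Order.TTheory GRing.Theory Num.Theory.
Import numFieldTopology.Exports numFieldNormedType.Exports.
Local Open Scope classical_set_scope.
Local Open Scope ring_scope.

(* (a) For continuous f, the strict sublevel set {f < l} is an open subset of
   f^-1(]-oo, l]), hence lies in sigma_f(l); together with sigma_f(l) being
   contained in {f <= l} this pins down f_{sigma_f} = f, and closure {f <= l}
   stays inside {f < m} for l < m.
   (b) Every x in s(l) has f_s(x) <= l, and f_s(x) < l forces x in s(l).  So
   f_s < l near any point where f_s < l (s(l) is open), and f_s > l near any
   point where f_s > l, because such a point avoids s(m) for some m > l and thus
   avoids closure s(l).  Right continuity of s identifies the interior of
   {f_s <= l} with s(l). *)

Lemma continuous_set_val {T : topologicalType} (D : set T) :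
  continuous (@set_val T D).
Proof. exact: initial_continuous. Qed.

Section sigma_of_function.
Context {R : realType} {T : topologicalType}.
Variable f : T -> R.

Lemma sigma_of_le l x : sigma_of f l x -> f x <= l.
Proof. by move/interior_subset; rewrite /= in_itv. Qed.

Lemma le_sigma_of l m : l <= m -> sigma_of f l `<=` sigma_of f m.
Proof.
by move=> lm; apply: interiorS => y /=; rewrite !in_itv /= => /le_trans; apply.
Qed.

Lemma sigma_of_right_continuous l :
  sigma_of f l = interior (\bigcap_(m in `]l, +oo[) sigma_of f m).
Proof.
apply/seteqP; split.
  rewrite -open_subsetE; last exact: open_interior.
  move=> y sy m; rewrite /= in_itv /= andbT => /ltW lm; exact: le_sigma_of sy.
apply: interiorS => y sy; rewrite /= in_itv /=.
apply/unstable.ler_gtP => m lm; apply: sigma_of_le; apply: sy.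
by rewrite /= in_itv /= lm.
Qed.

Lemma bigcap_sigma_of : \bigcap_(l in [set: R]) sigma_of f l = set0.
Proof.
apply/seteqP; split => // y /(_ (f y - 1) I) /sigma_of_le; lra.
Qed.

Lemma adm_domain_sigma_of : adm_domain (sigma_of f) = [set: T].
Proof. by rewrite /adm_domain bigcap_sigma_of setC0. Qed.

Hypothesis cf : continuous f.

Lemma sigma_of_gt l x : f x < l -> sigma_of f l x.
Proof.
move=> fxl; rewrite /sigma_of /interior /=.
by apply: filterS (cvgr_lt _ (@cf x) _ fxl) => y /ltW; rewrite /= in_itv.
Qed.

Lemma bigcup_sigma_of : \bigcup_(l in [set: R]) sigma_of f l = [set: T].
Proof.
apply/seteqP; split => // y _; exists (f y + 1) => //; apply: sigma_of_gt; lra.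
Qed.

Lemma closure_sigma_of l m : l < m -> closure (sigma_of f l) `<=` sigma_of f m.
Proof.
move=> lm y cly; apply: sigma_of_gt; rewrite ltNge; apply/negP => my.
have [z [/sigma_of_le + /= lfz]] := cly _ (cvgr_gt _ (@cf y) _ (lt_le_trans lm my)).
lra.
Qed.

Lemma continuous_spectral_family_sigma_of :
  continuous_spectral_family (sigma_of f).
Proof.
split; [split|].
- by move=> l; exact: open_interior.
- exact: le_sigma_of.
- exact: sigma_of_right_continuous.
- by rewrite bigcap_sigma_of interior0.
- exact: bigcup_sigma_of.
- exact: closure_sigma_of.
Qed.

Lemma induced_fun_sigma_of : induced_fun (sigma_of f) = f.
Proof.
apply/funext => x; apply/eqP; rewrite eq_le; apply/andP; split.
  apply/unstable.ler_gtP => m xm; apply: ge_inf; last exact: sigma_of_gt.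
  by exists (f x) => l /sigma_of_le.
apply: lb_le_inf => [|l /sigma_of_le //].
by exists (f x + 1); apply: sigma_of_gt; lra.
Qed.

End sigma_of_function.

Section induced_function.
Context {R : realType} {T : topologicalType}.
Variable s : R -> set T.
Hypothesis s_mono : forall l m, l <= m -> s l `<=` s m.

Lemma adm_domain_has_lbound x : adm_domain s x -> has_lbound [set l | s l x].
Proof.
rewrite /adm_domain setC_bigcap => -[l0 _ /= nsl0].
exists l0 => l slx; rewrite leNgt; apply/negP => /ltW ll0.
by apply: nsl0; apply: s_mono ll0 _ slx.
Qed.

Lemma induced_fun_le x l : adm_domain s x -> s l x -> induced_fun s x <= l.
Proof. by move=> /adm_domain_has_lbound /ge_inf; apply. Qed.

Hypothesis s_cover : \bigcup_(l in [set: R]) s l = [set: T].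

Lemma levels_neq0 x : [set l | s l x] !=set0.
Proof.
have : (\bigcup_(l in [set: R]) s l) x by rewrite s_cover.
by case=> l _ slx; exists l.
Qed.

Lemma induced_fun_lt x l : induced_fun s x < l -> s l x.
Proof.
by move=> /(inf_lt (levels_neq0 x)) [m smx /ltW ml]; exact: s_mono smx.
Qed.

Lemma induced_fun_ge x l : ~ s l x -> l <= induced_fun s x.
Proof.
move=> nslx; apply: lb_le_inf; first exact: levels_neq0.
move=> m smx; rewrite leNgt; apply/negP => /ltW ml; by apply: nslx; apply: s_mono ml _ smx.
Qed.

Hypothesis s_open : forall l, open (s l).

Lemma near_induced_fun_lt x l : induced_fun s x < l ->
  \forall y \near x, adm_domain s y -> induced_fun s y < l.
Proof.
move=> fxl; pose m := (induced_fun s x + l) / 2.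
have smx : s m x by apply: induced_fun_lt; rewrite /m; lra.
apply: filterS (open_nbhs_nbhs (conj (s_open m) smx)) => y smy Dy.
have := induced_fun_le Dy smy; rewrite /m; lra.
Qed.

Hypothesis s_closure : forall l m, l < m -> closure (s l) `<=` s m.

Lemma near_induced_fun_gt x l : adm_domain s x -> l < induced_fun s x ->
  \forall y \near x, l < induced_fun s y.
Proof.
move=> Dx lfx; pose m := (l + induced_fun s x) / 2.
have nclx : ~ closure (s m) x.
  move=> /(s_closure (_ : m < (m + induced_fun s x) / 2)) smx.
  have := induced_fun_le Dx (smx ltac:(rewrite /m; lra)); rewrite /m; lra.
have ncl_nbhs : nbhs x (~` closure (s m)).
  by apply: open_nbhs_nbhs; split=> //; rewrite openC; exact: closed_closure.
apply: filterS ncl_nbhs => y ncly.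
have := induced_fun_ge (fun smy => ncly (subset_closure smy)); rewrite /m; lra.
Qed.

Lemma continuous_induced_fun :
  continuous (fun x : set_type (adm_domain s) => induced_fun s (set_val x)).
Proof.
move=> x; apply/(@cvgrPdist_lt _ _ _ _ (nbhs_filter x)) => e e0.
set a := induced_fun s (set_val x).
have [lt_ae gt_ae] : a < a + e /\ a - e < a by split; lra.
have lt_near := continuous_set_val (near_induced_fun_lt lt_ae).
have gt_near := continuous_set_val (near_induced_fun_gt (set_valP x) gt_ae).
apply: (filterS2 (nbhs_filter x)) lt_near gt_near => y /= /(_ (set_valP y)) fyl fyg.
rewrite ltr_norml; apply/andP; split; lra.
Qed.

Hypothesis s_right_continuous :
  forall l, s l = interior (\bigcap_(m in `]l, +oo[) s m).

(* A neighbourhood V of x on which f_s <= l over the domain lies in every s(m),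
   m > l: points outside the domain lie in every s(m) anyway. *)
Lemma sigma_of_induced_fun l :
  sigma_of (fun x : set_type (adm_domain s) => induced_fun s (set_val x)) l =
  set_val @^-1` (s l).
Proof.
apply/seteqP; split; last first.
  rewrite /sigma_of -open_subsetE; last first.
    move/continuousP: (@continuous_set_val _ (adm_domain s)); apply.
    exact: s_open.
  by move=> y sy; rewrite /= in_itv /=; exact: induced_fun_le (set_valP y) sy.
move=> x /=; rewrite /sigma_of /interior nbhsE => -[W [[V oV eW] Wx] Wle].
rewrite s_right_continuous /interior nbhsE.
exists V; first by split=> //; rewrite -eW in Wx.
move=> z Vz m; rewrite /= in_itv /= andbT => lm.
have [Dz|/contrapT /(_ m I) //] := pselect (adm_domain s z).
have /Wle : W (exist _ z (mem_set Dz)) by rewrite -eW.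
rewrite /= in_itv /= => fzl; apply: induced_fun_lt; exact: le_lt_trans lm.
Qed.

End induced_function.

Theorem theorem2p37 (R : realType) (M : topologicalType) (hM : hausdorff_space M) :
  (forall f : M -> R, continuous f ->
     [/\ continuous_spectral_family (sigma_of f),
         adm_domain (sigma_of f) = [set: M] &
         induced_fun (sigma_of f) = f]) /\
  (forall s : R -> set M, continuous_spectral_family s ->
     let g := fun x : set_type (adm_domain s) => induced_fun s (set_val x) in
     [/\ continuous g,
         spectral_family (sigma_of g) &
         forall l : R, sigma_of g l = set_val @^-1` (s l)]).
Proof.
split=> [f cf|s [[s_open s_mono s_rc _ s_cover] s_closure] g].
  split; [exact: continuous_spectral_family_sigma_of|
          exact: adm_domain_sigma_of| exact: induced_fun_sigma_of].
have cg : continuous g by exact: continuous_induced_fun.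
split=> //; first by case: (continuous_spectral_family_sigma_of cg).
exact: sigma_of_induced_fun.
Qed.
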